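(* Let $\Phi\in\check{S}_{AB}$ satisfy $\Phi(\overline{\mathfrak{Y}_{\mathfrak{E}_A}},\overline{\mathfrak{Y}_{\mathfrak{E}_B}})=\mathbf{N}$. Then for all $\mathfrak{l}_B\in\mathfrak{E}_B$, $\Phi(\overline{\mathfrak{Y}_{\mathfrak{E}_A}},\mathfrak{l}_B)=\mathbf{N}$, and for all $\mathfrak{l}_A\in\mathfrak{E}_A$, $\Phi(\mathfrak{l}_A,\overline{\mathfrak{Y}_{\mathfrak{E}_B}})=\mathbf{N}$.
   Context: $\mathfrak{B}=\{\mathbf{Y},\mathbf{N},\bot\}$ with $\bot$ below the incomparable $\mathbf{Y},\mathbf{N}$, meet $\wedge$ and involution $\overline{\cdot}$ exchanging $\mathbf{Y},\mathbf{N}$. $(\mathfrak{S}_A,\mathfrak{E}_A,\epsilon^{\mathfrak{S}_A})$, $(\mathfrak{S}_B,\mathfrak{E}_B,\epsilon^{\mathfrak{S}_B})$ are States/Effects Chu spaces; each effect space is a down-complete Inf semi-lattice (infima $\inf$) with negation $\mathfrak{l}\mapsto\overline{\mathfrak{l}}$, a constant-$\mathbf{Y}$ effect $\mathfrak{Y}_{\mathfrak{E}}$ and a bottom effect $\bot_{\mathfrak{E}}$ with $\mathfrak{l}\sqcap\overline{\mathfrak{l}}=\bot_{\mathfrak{E}}$. $\check{S}_{AB}$ is the maximal tensor product: maps $\Phi:\mathfrak{E}_A\times\mathfrak{E}_B\to\mathfrak{B}$ with $\Phi(\inf^{\mathfrak{E}_A}_i\mathfrak{l}_{i,A},\mathfrak{l}_B)=\bigwedge_i\Phi(\mathfrak{l}_{i,A},\mathfrak{l}_B)$,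 $\Phi(\mathfrak{l}_A,\inf^{\mathfrak{E}_B}_j\mathfrak{l}_{j,B})=\bigwedge_j\Phi(\mathfrak{l}_A,\mathfrak{l}_{j,B})$, $\Phi(\overline{\mathfrak{l}_A},\mathfrak{Y}_{\mathfrak{E}_B})=\overline{\Phi(\mathfrak{l}_A,\mathfrak{Y}_{\mathfrak{E}_B})}$, $\Phi(\mathfrak{Y}_{\mathfrak{E}_A},\overline{\mathfrak{l}_B})=\overline{\Phi(\mathfrak{Y}_{\mathfrak{E}_A},\mathfrak{l}_B)}$, $\Phi(\mathfrak{Y}_{\mathfrak{E}_A},\mathfrak{Y}_{\mathfrak{E}_B})=\mathbf{Y}$. *)

From Stdlib Require Import ClassicalEpsilon.

(* The three-element possibilistic truth-value set B = {Y, N, bot},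
   bot below the incomparable Y and N. *)
Inductive BB : Type := BY | BN | Bbot.

Definition Ble (a b : BB) : Prop := a = Bbot \/ a = b.

Definition Bmeet (a b : BB) : BB :=
  match a, b with
  | BY, BY => BY
  | BN, BN => BN
  | _, _ => Bbot
  end.

Definition Bneg (a : BB) : BB :=
  match a with BY => BN | BN => BY | Bbot => Bbot end.

Definition Bbigmeet {I : Type} (f : I -> BB) : BB :=
  if excluded_middle_informative (forall i, f i = BY) then BY
  else if excluded_middle_informative (forall i, f i = BN) then BN
  else Bbot.

(* A States/Effects Chu space whose effect space is a down-complete
   Inf semi-lattice with negation, constant-Y effect and bottom effect. *)
Record EffectChu := {
  St : Type;
  Eff : Type;
  Ele : Eff -> Eff -> Prop;
  Ele_refl : forall l, Ele l l;
  Ele_trans : forall l1 l2 l3, Ele l1 l2 -> Ele l2 l3 -> Ele l1 l3;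
  Ele_antisym : forall l1 l2, Ele l1 l2 -> Ele l2 l1 -> l1 = l2;
  Einf : forall I : Type, (I -> Eff) -> Eff;
  Einf_lb : forall (I : Type) (f : I -> Eff), inhabited I ->
      forall i, Ele (Einf I f) (f i);
  Einf_glb : forall (I : Type) (f : I -> Eff), inhabited I ->
      forall l, (forall i, Ele l (f i)) -> Ele l (Einf I f);
  Eneg : Eff -> Eff;
  Eneg_invol : forall l, Eneg (Eneg l) = l;
  EY : Eff;
  Ebot : Eff;
  Ebot_least : forall l, Ele Ebot l;
  Emeet_neg : forall l,
      Einf bool (fun b => if b then l else Eneg l) = Ebot;
  eps : St -> Eff -> BB;
  eps_Y : forall s, eps s EY = BY;
  eps_neg : forall s l, eps s (Eneg l) = Bneg (eps s l);
  eps_inf : forall (I : Type) (f : I -> Eff) s, inhabited I ->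
      eps s (Einf I f) = Bbigmeet (fun i => eps s (f i))
}.

Definition in_max_tensor (A B : EffectChu) (Phi : Eff A -> Eff B -> BB) : Prop :=
  (forall (I : Type) (f : I -> Eff A) (lB : Eff B), inhabited I ->
      Phi (Einf A I f) lB = Bbigmeet (fun i => Phi (f i) lB)) /\
  (forall (J : Type) (lA : Eff A) (g : J -> Eff B), inhabited J ->
      Phi lA (Einf B J g) = Bbigmeet (fun j => Phi lA (g j))) /\
  (forall lA, Phi (Eneg A lA) (EY B) = Bneg (Phi lA (EY B))) /\
  (forall lB, Phi (EY A) (Eneg B lB) = Bneg (Phi (EY A) lB)) /\
  Phi (EY A) (EY B) = BY.

(* For fixed first argument Φ(¬Y_A, -) preserves infima, so it is N at ⊥_B = Y_B ⊓ ¬Y_B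
   (it is N at ¬Y_B by hypothesis and at Y_B because Φ(¬Y_A, Y_B) = ¬Φ(Y_A, Y_B) = ¬Y = N).
   Since every effect l satisfies ⊥ = ⊥ ⊓ l, the value N at ⊥ propagates to every l.
   The second claim is the same argument in the first variable. *)
From Stdlib Require Import ClassicalEpsilon.

Lemma Bbigmeet_eqBN {I : Type} (f : I -> BB) :
  inhabited I -> Bbigmeet f = BN <-> forall i, f i = BN.
Proof.
  intros [i0]; unfold Bbigmeet; split.
  - destruct (excluded_middle_informative _) as [_|_]; [discriminate|].
    destruct (excluded_middle_informative _) as [allN|_]; [now intros|discriminate].
  - intros allN.
    destruct (excluded_middle_informative _) as [allY|_].
    + now specialize (allY i0); rewrite allN in allY.
    + destruct (excluded_middle_informative _) as [_|notN]; [reflexivity|].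
      now exfalso; apply notN.
Qed.

Definition Emeet (C : EffectChu) (l l' : Eff C) : Eff C :=
  Einf C bool (fun b => if b then l else l').

Lemma Emeet_l (C : EffectChu) (l l' : Eff C) : Ele C l l' -> Emeet C l l' = l.
Proof.
  intros le_l_l'; apply Ele_antisym.
  - exact (Einf_lb C bool _ (inhabits true) true).
  - apply Einf_glb; [exact (inhabits true)|].
    intros [|]; [apply Ele_refl|exact le_l_l'].
Qed.

Section InfMorphismIntoB.

Variable C : EffectChu.
Variable g : Eff C -> BB.
Hypothesis g_inf : forall (I : Type) (f : I -> Eff C),
  inhabited I -> g (Einf C I f) = Bbigmeet (fun i => g (f i)).

Lemma inf_morph_meet_eqBN (l l' : Eff C) :
  g (Emeet C l l') = BN <-> g l = BN /\ g l' = BN.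
Proof.
  unfold Emeet; rewrite g_inf, Bbigmeet_eqBN by exact (inhabits true).
  split.
  - intros allN; exact (conj (allN true) (allN false)).
  - intros [gl gl'] [|]; assumption.
Qed.

Lemma inf_morph_bot_eqBN (l : Eff C) :
  g l = BN -> g (Eneg C l) = BN -> g (Ebot C) = BN.
Proof.
  intros gl gnl; rewrite <- (Emeet_neg C l).
  exact (proj2 (inf_morph_meet_eqBN l (Eneg C l)) (conj gl gnl)).
Qed.

Lemma inf_morph_constBN : g (Ebot C) = BN -> forall l, g l = BN.
Proof.
  intros gbot l.
  rewrite <- (Emeet_l C _ _ (Ebot_least C l)) in gbot.
  exact (proj2 (proj1 (inf_morph_meet_eqBN _ _) gbot)).
Qed.

End InfMorphismIntoB.

Theorem mainTheorem16 (A B : EffectChu) (Phi : Eff A -> Eff B -> BB)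
  (HPhi : in_max_tensor A B Phi)
  (HN : Phi (Eneg A (EY A)) (Eneg B (EY B)) = BN) :
  (forall lB : Eff B, Phi (Eneg A (EY A)) lB = BN) /\
  (forall lA : Eff A, Phi lA (Eneg B (EY B)) = BN).
Proof.
  destruct HPhi as (inf_A & inf_B & neg_A & neg_B & PhiYY).
  split.
  - pose (g := Phi (Eneg A (EY A))).
    assert (inf_g : forall J h, inhabited J -> g (Einf B J h) = Bbigmeet (fun j => g (h j)))
      by (intros; apply inf_B; assumption).
    apply (inf_morph_constBN B g inf_g), (inf_morph_bot_eqBN B g inf_g (EY B)); [|exact HN].
    unfold g; now rewrite neg_A, PhiYY.
  - pose (g := fun lA => Phi lA (Eneg B (EY B))).
    assert (inf_g : forall I h, inhabited I -> g (Einf A I h) = Bbigmeet (fun i => g (h i)))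
      by (intros; apply inf_A; assumption).
    apply (inf_morph_constBN A g inf_g), (inf_morph_bot_eqBN A g inf_g (EY A)); [|exact HN].
    unfold g; now rewrite neg_B, PhiYY.
Qed.
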